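(* Let $\mathcal{S}\subset\mathbb{R}_{\ge0}$ be measurable with positive Lebesgue measure, $G$ a probability distribution on $\mathbb{R}$, and $T(G)=\int\nu\,dG/\int\delta\,dG$ a ratio functional. Let $\mathcal{I}=\mathcal{I}(|Z_1|,\dots,|Z_n|)$ be any random interval that is a function of nonnegative observations $|Z_1|,\dots,|Z_n|$. Then $$\mathbb{P}^A_G\big[T(G)\in\mathcal{I}\big]=\mathbb{P}^B_{\mathrm{Tilt}[G]}\big[\mathrm{Tilt}[T](\mathrm{Tilt}[G])\in\mathcal{I}\big],$$ where under $\mathbb{P}^A_G$ the $|Z_1|,\dots,|Z_n|$ are independently generated from the end-truncation model with prior $G$, and under $\mathbb{P}^B_{\mathrm{Tilt}[G]}$ they are independently generated from the per-unit truncation model with prior $\mathrm{Tilt}[G]$.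
   Context: $\varphi(z;\mu)$ is the $\mathrm{N}(\mu,1)$ density, $\varphi^{\mathrm{fold}}(z;\mu)=\varphi(z;\mu)+\varphi(-z;\mu)$ and $\Phi(\mathcal{S};\mu)=\int_{\mathcal{S}}\varphi^{\mathrm{fold}}(z;\mu)dz$. End-truncation model with prior $G$: $\mu\sim G$, $|Z|\mid\mu\sim|\mathrm{N}(\mu,1)|$ (folded normal), and $|Z|$ is observed only if $|Z|\in\mathcal{S}$ (each observation is a draw of $|Z|$ conditional on $|Z|\in\mathcal{S}$). Per-unit truncation model with prior $H$: $\mu\sim H$ and $|Z|\mid\mu$ has density $\varphi^{\mathrm{fold}}(z;\mu)\mathbf{1}(z\in\mathcal{S})/\Phi(\mathcal{S};\mu)$. Tilting: $\mathrm{Tilt}[G](d\mu)=\Phi(\mathcal{S};\mu)G(d\mu)/\int\Phi(\mathcal{S};\mu')G(d\mu')$, and for $T(G)=\int\nu\,dG/\int\delta\,dG$, $\mathrm{Tilt}[T](\tilde G)=\int\nu(\mu)\Phi(\mathcal{S};\mu)^{-1}\tilde G(d\mu)/\int\delta(\mu)\Phi(\mathcal{S};\mu)^{-1}\tilde G(d\mu)$ (integrals assumed well defined). *)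

From HB Require Import structures.
From mathcomp Require Import all_boot all_order all_algebra.
From mathcomp Require Import all_classical all_reals all_analysis.
Set Implicit Arguments. Unset Strict Implicit. Unset Printing Implicit Defensive.
Import Order.TTheory GRing.Theory Num.Theory.
Local Open Scope classical_set_scope.
Local Open Scope ring_scope.

Section Defs.
Variable R : realType.

Definition phi (mu z : R) : R := normal_pdf mu 1 z.

Definition phi_fold (mu z : R) : R := phi mu z + phi mu (- z).

Definition PhiS (S : set R) (mu : R) : \bar R :=
  (\int[@lebesgue_measure R]_(z in S) (phi_fold mu z)%:E)%E.

Definition ratioT (G : probability R R) (nu delta : R -> R) : R :=
  fine (\int[G]_x (nu x)%:E)%E / fine (\int[G]_x (delta x)%:E)%E.

Definition tiltT (S : set R) (H : probability R R) (nu delta : R -> R) : R :=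
  fine (\int[H]_x (nu x / fine (PhiS S x))%:E)%E /
  fine (\int[H]_x (delta x / fine (PhiS S x))%:E)%E.

Definition is_tilt (S : set R) (G H : probability R R) : Prop :=
  forall A : set R, measurable A ->
    H A = (fine (\int[G]_(x in A) PhiS S x)%E / fine (\int[G]_x PhiS S x)%E)%:E.

(* Law of one observation |Z| in the end-truncation model with prior G:
   mu ~ G, |Z| | mu ~ |N(mu,1)|, observed conditionally on |Z| in S:
   P(|Z| in B) = P(|Z| in B /\ |Z| in S) / P(|Z| in S). *)
Definition end_trunc_law (S : set R) (G P : probability R R) : Prop :=
  forall B : set R, measurable B ->
    P B = (fine (\int[G]_x PhiS (B `&` S) x)%E / fine (\int[G]_x PhiS S x)%E)%:E.

(* Law of one observation |Z| in the per-unit truncation model with prior H: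
   mu ~ H, |Z| | mu has density phi^fold(z;mu) 1(z in S) / Phi(S;mu). *)
Definition per_unit_law (S : set R) (H P : probability R R) : Prop :=
  forall B : set R, measurable B ->
    P B = (\int[H]_x (fine (PhiS (B `&` S) x) / fine (PhiS S x))%:E)%E.

(* Iterated integral w.r.t. the n-fold product P^{(x) n}; the observation
   vector (|Z_1|,...,|Z_n|) is represented by the list [:: z_1; ...; z_n]. *)
Fixpoint iid_int (P : probability R R) (n : nat) (f : seq R -> \bar R) : \bar R :=
  match n with
  | 0 => f [::]
  | n'.+1 => (\int[P]_x iid_int P n' (fun s => f (x :: s)))%E
  end.

Definition iid_prob (P : probability R R) (n : nat) (E : set (seq R)) : \bar R :=
  iid_int P n (fun s => (\1_E s)%:E).

End Defs.

(* Tilting G by mu |-> Phi(S; mu) gives the prior H = Tilt[G] with density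
   Phi(S; .) / c with respect to G, where c = \int Phi(S; .) dG.  Hence
   \int f / Phi(S; .) dH = \int f dG / c for every G-integrable f.  With
   f = nu and f = delta the constant c cancels, so Tilt[T](H) = T(G); with
   f = Phi(B /\ S; .) the per-unit truncation law of |Z| under H is the
   end-truncation law under G.  Both the parameter and the law of the
   observations are therefore the same in the two models. *)

From HB Require Import structures.
From mathcomp Require Import all_boot all_order all_algebra.
From mathcomp Require Import all_classical all_reals all_analysis.
From mathcomp Require Import measurable_realfun.
Import Order.TTheory GRing.Theory Num.Theory.
Local Open Scope classical_set_scope.
Local Open Scope ring_scope.

Section integral_density.
Local Open Scope ereal_scope.
Context d (T : measurableType d) (R : realType).
Variables (mu : {sigma_finite_measure set T -> \bar R})
  (nu : {finite_measure set T -> \bar R}) (k : T -> R).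
Hypotheses (mk : measurable_fun setT k) (k_ge0 : forall x, (0 <= k x)%R)
  (nuE : forall A, measurable A -> nu A = \int[mu]_(x in A) (k x)%:E).

Let mEk : measurable_fun setT (EFin \o k).
Proof. exact/measurable_EFinP. Qed.

Lemma density_dominates : nu `<< mu.
Proof.
apply/null_content_dominatesP => A mA muA0.
by rewrite nuE// null_set_integral//; exact: measurable_funTS.
Qed.

Lemma ae_eq_density_Radon_Nikodym :
  ae_eq mu setT (Radon_Nikodym_SigmaFinite.f nu mu) (EFin \o k).
Proof.
apply: integral_ae_eq => //.
- exact: Radon_Nikodym_SigmaFinite.f_integrable density_dominates.
- move=> A _ mA; rewrite -nuE//.
  by rewrite -Radon_Nikodym_SigmaFinite.f_integral//; exact: density_dominates.
Qed.

Lemma ge0_integral_density (f : T -> \bar R) : (forall x, 0 <= f x) ->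
  measurable_fun setT f -> \int[nu]_x f x = \int[mu]_x (f x * (k x)%:E).
Proof.
move=> f0 mf.
rewrite -(Radon_Nikodym_SigmaFinite.change_of_variables density_dominates)//.
apply: ae_eq_integral => //.
- apply: emeasurable_funM => //.
  apply: measurable_int.
  exact: Radon_Nikodym_SigmaFinite.f_integrable density_dominates.
- exact: emeasurable_funM.
- exact: ae_eqe_mul2l ae_eq_density_Radon_Nikodym.
Qed.

Lemma integral_density (f : T -> \bar R) : measurable_fun setT f ->
  \int[nu]_x f x = \int[mu]_x (f x * (k x)%:E).
Proof.
move=> mf; rewrite integralE [RHS]integralE.
have funeposMk g x : (fun y => g y * (k y)%:E)^\+ x = g^\+ x * (k x)%:E.
  by rewrite !funeposE maxe_pMl ?lee_fin// mul0e.
have funenegMk g x : (fun y => g y * (k y)%:E)^\- x = g^\- x * (k x)%:E.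
  by rewrite !funenegE maxe_pMl ?lee_fin// mul0e mulNe.
under [X in _ = X - _]eq_integral do rewrite funeposMk.
under [X in _ = _ - X]eq_integral do rewrite funenegMk.
rewrite !ge0_integral_density//.
- exact: measurable_funeneg.
- exact: measurable_funepos.
Qed.

End integral_density.

Lemma integral_gt0 d (T : measurableType d) (R : realType)
    (mu : {measure set T -> \bar R}) (D : set T) (f : T -> R) :
  measurable D -> measurable_fun D f -> (0 < mu D)%E ->
  (forall x, D x -> 0 < f x) -> (0 < \int[mu]_(x in D) (f x)%:E)%E.
Proof.
move=> mD mf muD_gt0 f_gt0.
rewrite lt_def integral_ge0 ?andbT; last first.
  by move=> x /f_gt0 /ltW; rewrite lee_fin.
apply/eqP => int_f0.
have mEf : measurable_fun D (EFin \o f) by exact/measurable_EFinP.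
have [] := ae_eq_integral_abs mu mD mEf.
move=> /(_ _) [|N [mN muN0 DN]].
  rewrite -int_f0; apply: eq_integral => x /[!inE] Dx.
  by rewrite gee0_abs// lee_fin ltW// f_gt0.
have {}DN : D `<=` N.
  by move=> x Dx; apply: DN => /(_ Dx) /= /eqP; rewrite eqe gt_eqF// f_gt0.
have : (mu D <= mu N)%E by apply: le_measure; rewrite ?inE.
by rewrite muN0 => /(lt_le_trans muD_gt0); rewrite ltxx.
Qed.

Section folded_normal.
Variable R : realType.
Implicit Types (mu z : R) (A : set R).

Lemma phiE mu z : phi mu z = normal_peak 1 * normal_fun mu 1 z.
Proof. by rewrite /phi normal_pdfE ?oner_neq0. Qed.

Lemma phiN mu z : phi mu (- z) = phi (- mu) z.
Proof. by rewrite !phiE /normal_fun -opprD sqrrN opprK. Qed.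

Lemma phi_gt0 mu z : 0 < phi mu z.
Proof. by rewrite phiE mulr_gt0 ?normal_peak_gt0 ?oner_neq0 ?expR_gt0. Qed.

Lemma phi_fold_gt0 mu z : 0 < phi_fold mu z.
Proof. by rewrite addr_gt0 ?phi_gt0. Qed.

Lemma measurable_phi_fold mu : measurable_fun setT (phi_fold mu).
Proof.
rewrite (_ : phi_fold mu = phi mu \+ phi (- mu)); last first.
  by apply/funext => z; rewrite /phi_fold phiN.
by apply: measurable_funD; exact: measurable_normal_pdf.
Qed.

Lemma measurable_phi_fold_uncurry :
  measurable_fun setT (fun p : R * R => phi_fold p.1 p.2).
Proof.
have mphi : measurable_fun setT (fun p : R * R => phi p.1 p.2).
  rewrite (_ : (fun p => _) = (fun p => normal_peak 1 * normal_fun p.1 1 p.2));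
    last by apply/funext => p; rewrite phiE.
  apply: measurable_funM => //; apply: measurableT_comp => //.
  apply: measurable_funM => //; apply: measurableT_comp => //.
  by apply: measurable_funX; apply: measurable_funB.
apply: measurable_funD => //.
rewrite (_ : (fun p => _) =
  (fun p : R * R => phi p.1 p.2) \o (fun p => (p.1, - p.2)))//.
apply: measurableT_comp mphi _.
by apply: measurable_fun_pair => //; exact: measurableT_comp.
Qed.

Lemma PhiS_ge0 A mu : (0 <= PhiS A mu)%E.
Proof. by apply: integral_ge0 => z _; rewrite lee_fin ltW// phi_fold_gt0. Qed.

Lemma PhiS_le2 A mu : measurable A -> (PhiS A mu <= 2%:E)%E.
Proof.
move=> mA; have mphi := measurable_phi_fold mu.
apply: (@le_trans _ _ (PhiS setT mu)).
  apply: ge0_subset_integral => //; first exact/measurable_EFinP.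
  by move=> z _; rewrite lee_fin ltW// phi_fold_gt0.
rewrite /PhiS /phi_fold; under eq_integral do rewrite EFinD phiN.
rewrite ge0_integralD//; last 4 first.
- by move=> z _; rewrite lee_fin normal_pdf_ge0.
- by apply/measurable_EFinP; exact: measurable_normal_pdf.
- by move=> z _; rewrite lee_fin normal_pdf_ge0.
- by apply/measurable_EFinP; exact: measurable_normal_pdf.
by rewrite /phi !integral_normal_pdf.
Qed.

Lemma PhiS_fin_num A mu : measurable A -> PhiS A mu \is a fin_num.
Proof.
move=> mA; rewrite ge0_fin_numE ?PhiS_ge0//.
exact: le_lt_trans (PhiS_le2 _ mu mA) (ltry 2).
Qed.

Lemma PhiS_fineK A mu : measurable A -> (fine (PhiS A mu))%:E = PhiS A mu.
Proof. by move=> mA; rewrite fineK// PhiS_fin_num. Qed.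

Lemma PhiS_gt0 A mu : measurable A -> (0 < lebesgue_measure A)%E ->
  (0 < PhiS A mu)%E.
Proof.
move=> mA A_gt0; apply: integral_gt0 => //.
- exact: measurable_funTS (measurable_phi_fold mu).
- by move=> z _; exact: phi_fold_gt0.
Qed.

Lemma measurable_PhiS A : measurable A -> measurable_fun setT (PhiS A).
Proof.
move=> mA.
rewrite (_ : PhiS A = fubini_F lebesgue_measure
    (fun p : R * R => (phi_fold p.1 p.2 * \1_A p.2)%:E)); last first.
  apply/funext => mu; rewrite /PhiS /fubini_F [LHS]integral_mkcond.
  apply: eq_integral => z _; rewrite /patch /indic.
  by case: (z \in A); rewrite /= ?mulr1 ?mulr0.
apply: measurable_fun_fubini_tonelli_F.
  apply/measurable_EFinP; apply: measurable_funM.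
    exact: measurable_phi_fold_uncurry.
  exact: measurableT_comp (measurable_indic mA) _.
by move=> p; rewrite lee_fin mulr_ge0 //; exact/ltW/phi_fold_gt0.
Qed.

Lemma measurable_fine_PhiS A : measurable A ->
  measurable_fun setT (fun mu => fine (PhiS A mu)).
Proof. by move=> mA; apply: measurableT_comp => //; exact: measurable_PhiS. Qed.

Lemma integrable_PhiS (m : {finite_measure set R -> \bar R}) A D :
  measurable A -> measurable D -> m.-integrable D (PhiS A).
Proof.
move=> mA mD; apply/integrableP; split.
  exact: measurable_funTS (measurable_PhiS _ mA).
apply: (@le_lt_trans _ _ (\int[m]_(x in D) (cst 2%:E) x)%E).
  apply: ge0_le_integral => //.
  - by apply/measurableT_comp/measurable_funTS => //; exact: measurable_PhiS.
  - by move=> x _; rewrite gee0_abs ?PhiS_ge0 ?PhiS_le2.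
by rewrite integral_cst// lte_mul_pinfty// -ge0_fin_numE// fin_num_measure.
Qed.

End folded_normal.

Section tilt.
Context {R : realType} {S : set R} {G H : probability R R}.
Hypotheses (mS : measurable S) (S_pos : (0 < lebesgue_measure S)%E)
  (tiltGH : is_tilt S G H).

Let c := fine (\int[G]_x PhiS S x).

Let fine_PhiS_gt0 (x : R) : 0 < fine (PhiS S x).
Proof. by rewrite -lte_fin PhiS_fineK// PhiS_gt0. Qed.

Let integral_PhiS_fin_num (A : set R) : measurable A ->
  (\int[G]_(x in A) PhiS S x)%E \is a fin_num.
Proof. by move=> mA; apply: integrable_fin_num => //; exact: integrable_PhiS. Qed.

Let c_gt0 : 0 < c.
Proof.
rewrite /c -lte_fin fineK ?integral_PhiS_fin_num//.
under eq_integral do rewrite -PhiS_fineK//.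
apply: integral_gt0 => //; first exact: measurable_fine_PhiS.
by rewrite [X in (_ < X)%E]probability_setT lte01.
Qed.

Lemma tilt_density (A : set R) : measurable A ->
  H A = (\int[G]_(x in A) (fine (PhiS S x) / c)%:E)%E.
Proof.
move=> mA; rewrite tiltGH// -/c EFinM fineK ?integral_PhiS_fin_num//.
rewrite -ge0_integralZr//; last 3 first.
- by apply: measurable_funTS; exact: measurable_PhiS.
- by move=> ? _; exact: PhiS_ge0.
- by rewrite lee_fin invr_ge0 ltW.
by apply: eq_integral => x _; rewrite EFinM PhiS_fineK.
Qed.

Lemma integral_tilt (f : R -> R) : G.-integrable setT (EFin \o f) ->
  (\int[H]_x (f x / fine (PhiS S x))%:E)%E =
  (fine (\int[G]_x (f x)%:E)%E / c)%:E.
Proof.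
move=> intf; have mf : measurable_fun setT f.
  by apply/measurable_EFinP; exact: measurable_int intf.
have mPhiSV : measurable_fun setT (fun x => (fine (PhiS S x))^-1).
  rewrite (_ : (fun x => _) = (@powR R ^~ (-1)) \o (fun x => fine (PhiS S x))).
    apply: measurableT_comp; first exact: measurable_powR.
    exact: measurable_fine_PhiS.
  by apply/funext => x /=; rewrite powR_inv1// ltW.
have k_ge0 x : 0 <= fine (PhiS S x) / c by rewrite divr_ge0// ltW.
have mk : measurable_fun setT (fun x => fine (PhiS S x) / c).
  by apply: measurable_funM => //; exact: measurable_fine_PhiS.
rewrite (@integral_density _ _ _ G H _ mk k_ge0 tilt_density); last first.
  by apply/measurable_EFinP; exact: measurable_funM.
under eq_integral do rewrite -EFinM mulrA divfK ?gt_eqF// EFinM.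
by rewrite integralZr// -[in LHS](fineK (integrable_fin_num _ intf)).
Qed.

Lemma tiltT_ratioT {nu delta : R -> R} :
  G.-integrable setT (EFin \o nu) -> G.-integrable setT (EFin \o delta) ->
  tiltT S H nu delta = ratioT G nu delta.
Proof.
move=> int_nu int_delta; rewrite /tiltT !integral_tilt//= /ratioT.
by rewrite invfM invrK mulrACA mulVf ?gt_eqF// mulr1.
Qed.

Lemma end_trunc_per_unit_law_eq {P Q : probability R R} :
  end_trunc_law S G P -> per_unit_law S H Q ->
  forall B, measurable B -> P B = Q B.
Proof.
move=> PE QE B mB; have mBS := measurableI _ _ mB mS.
have int_PhiS :
    G.-integrable setT (EFin \o (fun x => fine (PhiS (B `&` S) x))).
  apply: (eq_integrable measurableT (PhiS (B `&` S))).
    by move=> x _ /=; rewrite PhiS_fineK.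
  exact: integrable_PhiS.
rewrite PE// QE// integral_tilt//.
by congr (fine _ / _)%:E; apply: eq_integral => x _; rewrite PhiS_fineK.
Qed.

End tilt.

Lemma eq_measure_iid_int (R : realType) (P Q : probability R R) n f :
  (forall A, measurable A -> P A = Q A) -> iid_int P n f = iid_int Q n f.
Proof.
move=> PQ; elim: n f => [//|n IHn] f /=.
under eq_integral do rewrite IHn.
by apply: eq_measure_integral => A mA _; exact: PQ.
Qed.

Theorem theorem3 (R : realType) (S : set R)
  (mS : measurable S) (S_nneg : S `<=` [set x | 0 <= x])
  (S_pos : (0 < (@lebesgue_measure R) S)%E)
  (G : probability R R) (nu delta : R -> R)
  (int_nu : G.-integrable setT (fun x => (nu x)%:E))
  (int_delta : G.-integrable setT (fun x => (delta x)%:E))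
  (delta_ne0 : (\int[G]_x (delta x)%:E)%E != 0%E)
  (n : nat) (I : seq R -> interval R)
  (H : probability R R) (HH : is_tilt S G H)
  (PA PB : probability R R)
  (HA : end_trunc_law S G PA) (HB : per_unit_law S H PB) :
  iid_prob PA n [set s | ratioT G nu delta \in I s] =
  iid_prob PB n [set s | tiltT S H nu delta \in I s].
Proof.
rewrite (tiltT_ratioT mS S_pos HH int_nu int_delta) /iid_prob.
apply: eq_measure_iid_int => B mB.
exact: (end_trunc_per_unit_law_eq mS S_pos HH HA HB).
Qed.
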